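(* Let $t\in[0,1)$, $\tilde r,\tilde c\in\tilde\Delta_n$ with strictly positive entries, and $\tilde P_\circ\in\mathbb{R}^{n\times n}_{\ge0}$. (a) If every row of $\tilde P_\circ$ is nonzero, the row projection $\min\{D_t(\tilde P\|\tilde P_\circ):\tilde P\in\mathbb{R}^{n\times n}_{\ge0},\ \tilde P^{1/t^*}\mathbf 1_n=\tilde r^{1/t^*}\}$ is attained at $$\tilde P=\mathrm{diag}(\tilde r/\tilde\mu)\,\tilde P_\circ,\qquad \tilde\mu=\big(\tilde P_\circ^{1/t^*}\mathbf 1_n\big)^{t^*}.$$ (b) If every column of $\tilde P_\circ$ is nonzero, the column projection $\min\{D_t(\tilde P\|\tilde P_\circ):\tilde P\in\mathbb{R}^{n\times n}_{\ge0},\ (\tilde P^{1/t^*})^\top\mathbf 1_n=\tilde c^{1/t^*}\}$ is attained at $$\tilde P=\tilde P_\circ\,\mathrm{diag}(\tilde c/\tilde\xi),\qquad \tilde\xi=\big((\tilde P_\circ^{1/t^*})^\top\mathbf 1_n\big)^{t^*}.$$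
   Context: $t^*=1/(2-t)$; all powers and the division $\tilde r/\tilde\mu$ are entrywise; $\mathbf 1_n$ is the all-ones vector. For $s\ne1$, $\log_s(z)=(z^{1-s}-1)/(1-s)$. Co-simplex $\tilde\Delta_n=\{\tilde p\in\mathbb{R}^n:\tilde p\ge0,\ \sum_i\tilde p_i^{1/t^*}=1\}$. Tempered relative entropy $D_t(\tilde u\|\tilde v)=\sum_k[\tilde u_k(\log_t\tilde u_k-\log_t\tilde v_k)-\log_{t-1}\tilde u_k+\log_{t-1}\tilde v_k]$ (sum over all entries). *)

From HB Require Import structures.
From mathcomp Require Import all_boot all_order all_algebra.
From mathcomp Require Import reals exp.
Set Implicit Arguments. Unset Strict Implicit. Unset Printing Implicit Defensive.
Import Order.TTheory GRing.Theory Num.Theory.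
Local Open Scope ring_scope.

Section TemperedDefs.
Variable R : realType.

Definition tstar (t : R) : R := (2 - t)^-1.

(* tempered logarithm log_s(z) = (z^{1-s} - 1)/(1 - s), s <> 1;
   real powers via powR (with 0 `^ a = 0 for a <> 0). *)
Definition logt (s z : R) : R := (powR z (1 - s) - 1) / (1 - s).

Definition mpow m n (A : 'M[R]_(m, n)) (a : R) : 'M[R]_(m, n) :=
  map_mx (fun x => powR x a) A.

Definition Dt (t : R) n (U V : 'M[R]_n) : R :=
  \sum_(i < n) \sum_(j < n)
    (U i j * (logt t (U i j) - logt t (V i j))
     - logt (t - 1) (U i j) + logt (t - 1) (V i j)).

Definition cosimplex (t : R) n (p : 'cV[R]_n) : Prop :=
  (forall i, 0 <= p i 0) /\ \sum_(i < n) powR (p i 0) (tstar t)^-1 = 1.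

Definition nonneg_mx n (P : 'M[R]_n) : Prop := forall i j, 0 <= P i j.

Definition ones n : 'cV[R]_n := const_mx 1.

Definition is_argmin (T : Type) (S : T -> Prop) (f : T -> R) (x : T) : Prop :=
  S x /\ forall y, S y -> f x <= f y.

End TemperedDefs.

From HB Require Import structures.
From mathcomp Require Import all_boot all_order all_algebra.
From mathcomp Require Import reals exp.
From mathcomp Require Import ring lra.
Import Order.TTheory GRing.Theory Num.Theory.
Local Open Scope ring_scope.

Set Implicit Arguments.
Unset Strict Implicit.

(* With a = 2 - t = 1/t^* > 1, every summand of D_t is the power divergence
   u^a/(a(a-1)) - u v^(a-1)/(a-1) + v^a/a.  Under the row constraint
   sum_j u_j^a = r_i^a the first and last terms are fixed, so a row projection
   maximises sum_j u_j v_j^(a-1).  Young's inequality bounds this by its value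
   at u proportional to v, which is the rescaling diag(r/mu) P0.  The column
   projection is the row projection of the transposed problem. *)

Section PowerDivergence.
Variable R : realType.

Definition powdiv (a u v : R) : R :=
  u `^ a / (a * (a - 1)) - u * v `^ (a - 1) / (a - 1) + v `^ a / a.

Lemma Dt_term_powdiv (t u v : R) : t < 1 -> 0 <= u ->
  u * (logt t u - logt t v) - logt (t - 1) u + logt (t - 1) v
  = powdiv (2 - t) u v.
Proof.
move=> t_lt1 u_ge0; rewrite /logt /powdiv.
have -> : 1 - (t - 1) = 2 - t by ring.
have -> : 2 - t - 1 = 1 - t by ring.
have <- : u * u `^ (1 - t) = u `^ (2 - t).
  have -> : 1 - t = (2 - t) - 1 by ring.
  by rewrite mulr_powRB1 //; lra.
have t1_neq0 : 1 - t != 0 by apply/eqP; lra.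
have t2_neq0 : 2 - t != 0 by apply/eqP; lra.
by field; rewrite t1_neq0 t2_neq0.
Qed.

Lemma Dt_powdiv (t : R) n (P P0 : 'M[R]_n) : t < 1 -> nonneg_mx P ->
  Dt t P P0 = \sum_i \sum_j powdiv (2 - t) (P i j) (P0 i j).
Proof.
move=> t_lt1 P_ge0; apply: eq_bigr => i _; apply: eq_bigr => j _.
exact: Dt_term_powdiv.
Qed.

Lemma Dt_trmx (t : R) n (P P0 : 'M[R]_n) : Dt t P^T P0^T = Dt t P P0.
Proof.
rewrite /Dt exchange_big /=.
by apply: eq_bigr => i _; apply: eq_bigr => j _; rewrite !mxE.
Qed.

Section RowProjection.
Variables (I : finType) (a : R).

Lemma sum_powdiv (w v : I -> R) :
  \sum_j powdiv a (w j) (v j) =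
    (\sum_j w j `^ a) / (a * (a - 1))
    - (\sum_j w j * v j `^ (a - 1)) / (a - 1) + (\sum_j v j `^ a) / a.
Proof. by rewrite /powdiv !big_split /= sumrN -!mulr_suml. Qed.

Lemma powR_normalize (rho S : R) : 1 < a -> 0 <= rho -> 0 < S ->
  (rho / S `^ a^-1) `^ a = rho `^ a / S.
Proof.
move=> a_gt1 rho_ge0 S_gt0.
have S_pow_gt0 : 0 < S `^ a^-1 by rewrite powR_gt0.
rewrite powRM // ?invr_ge0 ?ltW // -powRN -powRrM mulNr mulVf; last first.
  by apply/eqP; lra.
by rewrite powR_inv1 ?ltW.
Qed.

Lemma sum_powR_normalize (rho : R) (v : I -> R) : 1 < a -> 0 <= rho ->
  (forall j, 0 <= v j) -> 0 < \sum_j v j `^ a ->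
  \sum_j (rho / (\sum_k v k `^ a) `^ a^-1 * v j) `^ a = rho `^ a.
Proof.
move=> a_gt1 rho_ge0 v_ge0 S_gt0; set S := \sum_k _ in S_gt0 *.
have lam_ge0 : 0 <= rho / S `^ a^-1 by rewrite divr_ge0 ?powR_ge0.
under eq_bigr => j _ do rewrite powRM //.
by rewrite -mulr_sumr powR_normalize // divfK // gt_eqF.
Qed.

(* Summing Young's inequality u (lam v)^(a-1) <= u^a/a + (lam v)^a (a-1)/a;
   the constraint makes the right-hand side sum to sum_j (lam v_j)^a. *)
Lemma sum_mul_powR_le (lam : R) (u v : I -> R) : 1 < a -> 0 < lam ->
  (forall j, 0 <= u j) -> (forall j, 0 <= v j) ->
  \sum_j u j `^ a = \sum_j (lam * v j) `^ a ->
  \sum_j u j * v j `^ (a - 1) <= lam * \sum_j v j `^ a.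
Proof.
move=> a_gt1 lam_gt0 u_ge0 v_ge0 uv_eq.
have a_neq0 : a != 0 by apply/eqP; lra.
have a1_neq0 : a - 1 != 0 by apply/eqP; lra.
have young j : u j * (lam * v j) `^ (a - 1)
    <= u j `^ a / a + (lam * v j) `^ a / (a / (a - 1)).
  have -> : (lam * v j) `^ a = ((lam * v j) `^ (a - 1)) `^ (a / (a - 1)).
    by rewrite -powRrM [(_ - 1) * _]mulrC divfK.
  apply: conjugate_powR; rewrite ?powR_ge0 //; first lra.
  - by rewrite divr_gt0 //; lra.
  - by rewrite invf_div; field.
have lam_pow_gt0 : 0 < lam `^ (a - 1) by rewrite powR_gt0.
have lhsE : lam `^ (a - 1) * \sum_j u j * v j `^ (a - 1)
    = \sum_j u j * (lam * v j) `^ (a - 1).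
  rewrite mulr_sumr; apply: eq_bigr => j _.
  by rewrite powRM ?(ltW lam_gt0) // mulrCA.
have rhsE : lam `^ (a - 1) * (lam * \sum_j v j `^ a) = \sum_j (lam * v j) `^ a.
  rewrite mulrA [_ * lam]mulrC (mulr_powRB1 (ltW lam_gt0)); last lra.
  by rewrite mulr_sumr; apply: eq_bigr => j _; rewrite powRM ?(ltW lam_gt0).
rewrite -(ler_pM2l lam_pow_gt0) lhsE rhsE.
apply: le_trans (ler_sum _ (fun j _ => young j)) _.
rewrite big_split /= -!mulr_suml uv_eq; set L := \sum_j _.
suff -> : L / a + L / (a / (a - 1)) = L by [].
by field; rewrite a_neq0 a1_neq0.
Qed.

Lemma powdiv_row_min (rho : R) (u v : I -> R) : 1 < a -> 0 < rho ->
  (forall j, 0 <= u j) -> (forall j, 0 <= v j) -> 0 < \sum_j v j `^ a ->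
  \sum_j u j `^ a = rho `^ a ->
  \sum_j powdiv a (rho / (\sum_k v k `^ a) `^ a^-1 * v j) (v j)
  <= \sum_j powdiv a (u j) (v j).
Proof.
move=> a_gt1 rho_gt0 u_ge0 v_ge0 S_gt0 u_sum.
have lam_sum := sum_powR_normalize a_gt1 (ltW rho_gt0) v_ge0 S_gt0.
set S := \sum_k _ in S_gt0 lam_sum *.
set lam := rho / _ in lam_sum *.
have lam_gt0 : 0 < lam by rewrite divr_gt0 ?powR_gt0.
rewrite !sum_powdiv u_sum lam_sum lerD2r lerD2l lerN2 ler_pM2r ?invr_gt0; last lra.
have -> : \sum_j lam * v j * v j `^ (a - 1) = lam * S.
  rewrite mulr_sumr; apply: eq_bigr => j _.
  by rewrite -mulrA mulr_powRB1 //; lra.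
by apply: sum_mul_powR_le; rewrite // u_sum lam_sum.
Qed.

End RowProjection.

Lemma tstarV (t : R) : (tstar t)^-1 = 2 - t.
Proof. exact: invrK. Qed.

Lemma mpow_rowsumE n (P : 'M[R]_n) (a : R) i :
  (mpow P a *m (const_mx 1 : 'cV[R]_n)) i 0 = \sum_j P i j `^ a.
Proof. by rewrite !mxE; apply: eq_bigr => j _; rewrite !mxE mulr1. Qed.

Lemma mpow_rowsum_eq n (P : 'M[R]_n) (a : R) (r : 'cV[R]_n) :
  mpow P a *m (const_mx 1 : 'cV[R]_n) = mpow r a <->
  forall i, \sum_j P i j `^ a = r i 0 `^ a.
Proof.
split=> [PE i | PE]; first by rewrite -mpow_rowsumE PE mxE.
by apply/matrixP => i k; rewrite (ord1 k) mpow_rowsumE PE mxE.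
Qed.

Lemma trmx_mpow m n (P : 'M[R]_(m, n)) (a : R) : (mpow P a)^T = mpow P^T a.
Proof. by apply/matrixP => i j; rewrite !mxE. Qed.

Lemma nonneg_trmx n (P : 'M[R]_n) : nonneg_mx P -> nonneg_mx P^T.
Proof. by move=> P_ge0 i j; rewrite mxE. Qed.

Lemma rowsum_powR_gt0 n (P : 'M[R]_n) (a : R) i :
  row i P != 0 -> 0 < \sum_j P i j `^ a.
Proof.
move=> Pi_neq0; rewrite lt_def sumr_ge0 ?andbT; last first.
  by move=> j _; rewrite powR_ge0.
apply: contra Pi_neq0 => /eqP sum_eq0; apply/eqP/rowP => j.
have Pij_pow0 : P i j `^ a = 0.
  exact: psumr_eq0P (fun k _ => powR_ge0 (P i k) a) sum_eq0 j isT.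
by move/eqP: Pij_pow0; rewrite powR_eq0 !mxE => /andP[/eqP].
Qed.

Lemma row_projection n (t : R) (r : 'cV[R]_n) (P0 : 'M[R]_n) :
  t < 1 -> (forall i, 0 < r i 0) -> nonneg_mx P0 ->
  (forall i, row i P0 != 0) ->
  is_argmin
    (fun P : 'M[R]_n => nonneg_mx P /\
       mpow P (tstar t)^-1 *m (const_mx 1 : 'cV[R]_n) = mpow r (tstar t)^-1)
    (fun P => Dt t P P0)
    (diag_mx (\row_i (r i 0 /
       mpow (mpow P0 (tstar t)^-1 *m (const_mx 1 : 'cV[R]_n)) (tstar t) i 0))
     *m P0).
Proof.
move=> t_lt1 r_gt0 P0_ge0 P0_rows; rewrite tstarV.
set Q := _ *m P0.
have a_gt1 : 1 < 2 - t by lra.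
have QE i j : Q i j = r i 0 / (\sum_k P0 i k `^ (2 - t)) `^ (2 - t)^-1 * P0 i j.
  by rewrite /Q mul_diag_mx !mxE; under eq_bigr do rewrite !mxE mulr1.
have Q_ge0 : nonneg_mx Q.
  by move=> i j; rewrite QE mulr_ge0 // divr_ge0 ?powR_ge0 // ltW.
split.
  split=> //; apply/mpow_rowsum_eq => i.
  under eq_bigr do rewrite QE.
  exact: sum_powR_normalize a_gt1 (ltW (r_gt0 i)) (P0_ge0 i)
           (rowsum_powR_gt0 _ (P0_rows i)).
move=> P [P_ge0 /mpow_rowsum_eq P_rows]; rewrite !Dt_powdiv //.
apply: ler_sum => i _; under eq_bigr do rewrite QE.
exact: powdiv_row_min a_gt1 (r_gt0 i) (P_ge0 i) (P0_ge0 i)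
         (rowsum_powR_gt0 _ (P0_rows i)) (P_rows i).
Qed.

Lemma col_projection n (t : R) (c : 'cV[R]_n) (P0 : 'M[R]_n) :
  t < 1 -> (forall j, 0 < c j 0) -> nonneg_mx P0 ->
  (forall j, col j P0 != 0) ->
  is_argmin
    (fun P : 'M[R]_n => nonneg_mx P /\
       (mpow P (tstar t)^-1)^T *m (const_mx 1 : 'cV[R]_n) = mpow c (tstar t)^-1)
    (fun P => Dt t P P0)
    (P0 *m diag_mx (\row_j (c j 0 /
       mpow ((mpow P0 (tstar t)^-1)^T *m (const_mx 1 : 'cV[R]_n)) (tstar t) j 0))).
Proof.
move=> t_lt1 c_gt0 P0_ge0 P0_cols.
have P0T_rows j : row j P0^T != 0 by rewrite -tr_col trmx_eq0.
have [[QT_ge0 QT_rows] QT_min] :=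
  row_projection t_lt1 c_gt0 (nonneg_trmx P0_ge0) P0T_rows.
rewrite [(mpow P0 _)^T]trmx_mpow -[P0 *m _]trmxK trmx_mul tr_diag_mx.
split; first split.
- by move=> i j; rewrite mxE.
- by rewrite trmx_mpow trmxK.
- move=> P [P_ge0 P_cols]; rewrite -Dt_trmx trmxK -[Dt t P P0]Dt_trmx.
  by apply: QT_min; rewrite -trmx_mpow; split=> //; apply: nonneg_trmx.
Qed.

End PowerDivergence.

Theorem theorem4 (R : realType) (n : nat) (t : R) (r c : 'cV[R]_n)
    (P0 : 'M[R]_n) :
  0 <= t -> t < 1 ->
  cosimplex t r -> (forall i, 0 < r i 0) ->
  cosimplex t c -> (forall i, 0 < c i 0) ->
  nonneg_mx P0 ->
  ((forall i, row i P0 != 0) ->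
   let mu := mpow (mpow P0 (tstar t)^-1 *m (const_mx 1 : 'cV[R]_n)) (tstar t) in
   is_argmin
     (fun P : 'M[R]_n => nonneg_mx P /\
        mpow P (tstar t)^-1 *m (const_mx 1 : 'cV[R]_n) = mpow r (tstar t)^-1)
     (fun P => Dt t P P0)
     (diag_mx (\row_i (r i 0 / mu i 0)) *m P0))
  /\
  ((forall j, col j P0 != 0) ->
   let xi := mpow ((mpow P0 (tstar t)^-1)^T *m (const_mx 1 : 'cV[R]_n)) (tstar t) in
   is_argmin
     (fun P : 'M[R]_n => nonneg_mx P /\
        (mpow P (tstar t)^-1)^T *m (const_mx 1 : 'cV[R]_n) = mpow c (tstar t)^-1)
     (fun P => Dt t P P0)
     (P0 *m diag_mx (\row_j (c j 0 / xi j 0)))).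
Proof.
move=> _ t_lt1 _ r_gt0 _ c_gt0 P0_ge0.
split=> [P0_rows | P0_cols].
- exact: row_projection.
- exact: col_projection.
Qed.
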